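(* Let $x \in \{\text{complete}, \text{stable}, \text{grounded}, \text{preferred}, \text{ideal}, \text{semi-stable}, \text{eager}\}$ and let $\sigma$ be either the semantics $\sigma_x$ itself (credulous mode) or its skeptical mode $\sigma_x^{\cap}$. Then there exist argumentation frameworks $AF=(AR,Attacks)$ and $AF'=(AR',Attacks')$ with $AF \preceq_N AF'$ such that the following statement does NOT hold: $$\forall E \in \sigma(AF)\ \exists E' \in \sigma(AF') \text{ such that } (E' \not\subseteq AR \ \lor\ E' = E).$$
   Context: An argumentation framework is a pair $AF=(AR,Attacks)$ where $AR$ is a finite set (of arguments) and $Attacks \subseteq AR \times AR$; $a$ attacks $b$ iff $(a,b)\in Attacks$, and a set $S$ attacks $b$ iff some element of $S$ attacks $b$. An argumentation semantics $\sigma$ assigns to each argumentation framework $AF$ a set $\sigma(AF)$ of subsets of $AR$ (the $\sigma$-extensions). $AF'=(AR',Attacks')$ is a normal expansion of $AF=(AR,Attacks)$, written $AF\preceq_N AF'$, iff $AR\subseteq AR'$, $Attacks\subseteq Attacks'$, and there is no $(a,b)\in Attacks'\setminus Attacks$ with both $a\in AR$ and $b\in AR$. A set $S\subseteq AR$ is conflict-free iff no element of $S$ attacks an element of $S$. An argument $a$ is acceptable w.r.t. $S$ iff every attacker of $a$ is attacked by $S$. A conflict-free $S$ is admissible iff every element of $S$ is acceptable w.r.t. $S$. The range of $S$ is $S\cup S^+$ where $S^+=\{b\in AR: \text{some } a\in S \text{ attacks } b\}$. For an admissible set $S$: $S$ is a stable extension iff $S$ attacks every argument not in $S$; a preferred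 extension iff $S$ is $\subseteq$-maximal among admissible sets; a complete extension iff every argument acceptable w.r.t. $S$ belongs to $S$; the grounded extension iff $S$ is the $\subseteq$-minimal complete extension; the ideal extension iff $S$ is the $\subseteq$-maximal admissible set contained in every preferred extension; a semi-stable extension iff $S$ is a complete extension whose range is $\subseteq$-maximal among ranges of complete extensions; the eager extension iff $S$ is the $\subseteq$-maximal admissible set contained in every semi-stable extension. $\sigma_x(AF)$ is the set of all $x$-extensions of $AF$. The skeptical mode is $\sigma^{\cap}(AF)=\{\bigcap_{E\in\sigma(AF)}E\}$, with the convention that $\sigma^{\cap}(AF)=\emptyset$ when $\sigma(AF)=\emptyset$. *)

From mathcomp Require Import all_boot.
Set Implicit Arguments. Unset Strict Implicit. Unset Printing Implicit Defensive.

Section AF.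
Variable T : finType.

Definition wf_AF (AR : {set T}) (Att : {set T * T}) : bool :=
  Att \subset setX AR AR.

Definition attacks (Att : {set T * T}) (a b : T) : bool := (a, b) \in Att.

Definition set_attacks (Att : {set T * T}) (S : {set T}) (b : T) : bool :=
  [exists a in S, attacks Att a b].

Definition conflict_free (Att : {set T * T}) (S : {set T}) : bool :=
  [forall a in S, forall b in S, ~~ attacks Att a b].

Definition acceptable (AR : {set T}) (Att : {set T * T}) (S : {set T}) (a : T) : bool :=
  [forall b in AR, attacks Att b a ==> set_attacks Att S b].

Definition admissible (AR : {set T}) (Att : {set T * T}) (S : {set T}) : bool :=
  [&& S \subset AR, conflict_free Att S & [forall a in S, acceptable AR Att S a]].

Definition stable (AR : {set T}) (Att : {set T * T}) (S : {set T}) : bool :=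
  admissible AR Att S && [forall b in AR, (b \notin S) ==> set_attacks Att S b].

Definition preferred (AR : {set T}) (Att : {set T * T}) (S : {set T}) : bool :=
  admissible AR Att S &&
  [forall S' : {set T}, (admissible AR Att S' && (S \subset S')) ==> (S' == S)].

Definition complete (AR : {set T}) (Att : {set T * T}) (S : {set T}) : bool :=
  admissible AR Att S && [forall a in AR, acceptable AR Att S a ==> (a \in S)].

Definition grounded (AR : {set T}) (Att : {set T * T}) (S : {set T}) : bool :=
  complete AR Att S &&
  [forall S' : {set T}, (complete AR Att S' && (S' \subset S)) ==> (S' == S)].

Definition ideal (AR : {set T}) (Att : {set T * T}) (S : {set T}) : bool :=
  let P S' := admissible AR Att S' &&
              [forall E : {set T}, preferred AR Att E ==> (S' \subset E)] in
  P S && [forall S' : {set T}, (P S' && (S \subset S')) ==> (S' == S)].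

Definition range (AR : {set T}) (Att : {set T * T}) (S : {set T}) : {set T} :=
  S :|: [set b in AR | set_attacks Att S b].

Definition semi_stable (AR : {set T}) (Att : {set T * T}) (S : {set T}) : bool :=
  complete AR Att S &&
  [forall S' : {set T}, (complete AR Att S' &&
        (range AR Att S \subset range AR Att S')) ==>
        (range AR Att S' == range AR Att S)].

Definition eager (AR : {set T}) (Att : {set T * T}) (S : {set T}) : bool :=
  let P S' := admissible AR Att S' &&
              [forall E : {set T}, semi_stable AR Att E ==> (S' \subset E)] in
  P S && [forall S' : {set T}, (P S' && (S \subset S')) ==> (S' == S)].

End AF.

Inductive sem_kind :=
  | Complete | Stable | Grounded | Preferred | Ideal | SemiStable | Eager.

Inductive sem_mode := Credulous | Skeptical.

Definition sem_pred (k : sem_kind) {T : finType} (AR : {set T}) (Att : {set T * T})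
  : {set T} -> bool :=
  match k with
  | Complete => complete AR Att
  | Stable => stable AR Att
  | Grounded => grounded AR Att
  | Preferred => preferred AR Att
  | Ideal => ideal AR Att
  | SemiStable => semi_stable AR Att
  | Eager => eager AR Att
  end.

Definition sigma_x (k : sem_kind) {T : finType} (AR : {set T}) (Att : {set T * T})
  : {set {set T}} := [set E | sem_pred k AR Att E].

Definition sigma_cap (k : sem_kind) {T : finType} (AR : {set T}) (Att : {set T * T})
  : {set {set T}} :=
  let X := sigma_x k AR Att in
  if X == set0 then set0 else [set \bigcap_(E in X) E].

Definition sigma (m : sem_mode) (k : sem_kind) {T : finType}
  (AR : {set T}) (Att : {set T * T}) : {set {set T}} :=
  match m with
  | Credulous => sigma_x k AR Att
  | Skeptical => sigma_cap k AR Att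
  end.

Definition normal_expansion {T : finType} (AR : {set T}) (Att : {set T * T})
  (AR' : {set T}) (Att' : {set T * T}) : bool :=
  [&& AR \subset AR', Att \subset Att' &
      [forall p in Att' :\: Att, ~~ ((p.1 \in AR) && (p.2 \in AR))]].

(* In the framework ({a}, ∅) every semantics, credulous or skeptical, yields
   the single extension {a}.  Normally expand it by a self-attacking argument b
   that also attacks a: b belongs to no conflict-free set, so nothing can
   defend a against b, and the empty set is the only admissible set of the
   expansion.  Hence every extension of the expansion is ∅, which lies inside
   the original arguments and differs from {a}. *)

From mathcomp Require Import all_boot.
Set Implicit Arguments. Unset Strict Implicit. Unset Printing Implicit Defensive.

Section Extensions.
Variable T : finType.
Implicit Types (AR S : {set T}) (Att : {set T * T}).

Lemma sem_pred_admissible k AR Att S :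
  sem_pred k AR Att S -> admissible AR Att S.
Proof.
by case: k => /= /andP[] => [||/andP[]||/andP[]|/andP[]|/andP[]].
Qed.

Lemma sigma_set1 m k AR Att S :
  sigma_x k AR Att = [set S] -> sigma m k AR Att = [set S].
Proof.
case: m => //= sigmaS; rewrite /sigma_cap sigmaS big_set1 ifN //.
by apply/set0Pn; exists S; rewrite set11.
Qed.

Lemma sigma_sub1 m k AR Att S :
  sigma_x k AR Att \subset [set S] -> sigma m k AR Att \subset [set S].
Proof.
case: m => //=; rewrite /sigma_cap subset1 => /orP[]/eqP->.
  by rewrite big_set1 ifN ?subxx //; apply/set0Pn; exists S; rewrite set11.
by rewrite eqxx sub0set.
Qed.

Lemma admissible_defends AR Att S a b :
  admissible AR Att S -> a \in S -> b \in AR -> attacks Att b a ->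
  set_attacks Att S b.
Proof.
case/and3P => _ _ /forall_inP accS aS bAR.
exact: implyP (forall_inP (accS a aS) b bAR).
Qed.

Lemma conflict_free_self_attack Att S b :
  conflict_free Att S -> attacks Att b b -> b \notin S.
Proof.
move=> /forall_inP cfS bAb; apply/negP => bS.
by have /forall_inP/(_ b bS) := cfS b bS; rewrite bAb.
Qed.

(* A self-attacker whose only attacker is itself can never be
   counterattacked by a conflict-free set. *)
Lemma admissible_avoids_victims AR Att S a b :
  b \in AR -> attacks Att b b -> (forall c, attacks Att c b -> c = b) ->
  attacks Att b a -> admissible AR Att S -> a \notin S.
Proof.
move=> bAR bAb only_b bAa admS; apply/negP => aS.
have /existsP[c /andP[cS /only_b cb]] := admissible_defends admS aS bAR bAa.
have /and3P[_ cfS _] := admS.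
by move: cS; rewrite cb (negbTE (conflict_free_self_attack cfS bAb)).
Qed.

Section AttackFree.
Variable AR : {set T}.

Lemma attacks0 (a b : T) : attacks set0 a b = false.
Proof. by rewrite /attacks in_set0. Qed.

Lemma admissible_attack_free S : admissible AR set0 S = (S \subset AR).
Proof.
rewrite /admissible; case: (S \subset AR) => //=.
by apply/andP; split; apply/forall_inP => a _; apply/forall_inP => b _;
  rewrite attacks0.
Qed.

Lemma complete_attack_free S : complete AR set0 S = (S == AR).
Proof.
rewrite /complete admissible_attack_free eqEsubset; case: (S \subset AR) => //=.
have accept a : acceptable AR set0 S a.
  by apply/forall_inP => b _; rewrite attacks0.
apply/forall_inP/subsetP => [all_in a aAR | ARS a aAR].
  exact: implyP (all_in a aAR) (accept a).
by rewrite (ARS a aAR) implybT.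
Qed.

Lemma stable_attack_free S : stable AR set0 S = (S == AR).
Proof.
rewrite /stable admissible_attack_free eqEsubset; case: (S \subset AR) => //=.
apply/forall_inP/subsetP => [no_out b bAR | ARS b bAR]; last by rewrite ARS.
move: (no_out b bAR); case: (b \in S) => //= /existsP[c].
by rewrite attacks0 andbF.
Qed.

Lemma minimal_complete_attack_free (P R : rel {set T}) S :
  (forall S', R S' S') ->
  (complete AR set0 S && [forall S', complete AR set0 S' && P S S' ==> R S' S])
  = (S == AR).
Proof.
move=> Rrefl; rewrite complete_attack_free; case: eqP => //= ->.
apply/forallP => S'; rewrite complete_attack_free.
by apply/implyP => /andP[/eqP->].
Qed.

Lemma grounded_attack_free S : grounded AR set0 S = (S == AR).
Proof.
exact: (@minimal_complete_attack_free (fun A B => B \subset A) (fun A B => A == B)).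
Qed.

Lemma semi_stable_attack_free S : semi_stable AR set0 S = (S == AR).
Proof.
by apply: (@minimal_complete_attack_free
  (fun A B => range AR set0 A \subset range AR set0 B)
  (fun A B => range AR set0 A == range AR set0 B)) => S'.
Qed.

Lemma maximal_attack_free (P : pred {set T}) S :
  (forall S', P S' = (S' \subset AR)) ->
  (P S && [forall S', P S' && (S \subset S') ==> (S' == S)]) = (S == AR).
Proof.
move=> PE; rewrite PE; apply/idP/eqP => [/andP[SAR /forallP/(_ AR)] | ->].
  by rewrite PE subxx SAR => /eqP.
rewrite subxx; apply/forallP => S'; rewrite PE.
by apply/implyP => /andP[S'AR ARS']; rewrite eqEsubset S'AR.
Qed.

Lemma admissible_below_attack_free (Q : pred {set T}) S :
  (forall E, Q E = (E == AR)) ->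
  admissible AR set0 S && [forall E, Q E ==> (S \subset E)] = (S \subset AR).
Proof.
move=> QE; rewrite admissible_attack_free; case SAR: (S \subset AR) => //=.
by apply/forallP => E; rewrite QE; apply/implyP => /eqP->.
Qed.

Lemma preferred_attack_free S : preferred AR set0 S = (S == AR).
Proof. by apply: maximal_attack_free => S'; rewrite admissible_attack_free. Qed.

Lemma ideal_attack_free S : ideal AR set0 S = (S == AR).
Proof.
apply: maximal_attack_free => S'.
exact: admissible_below_attack_free preferred_attack_free.
Qed.

Lemma eager_attack_free S : eager AR set0 S = (S == AR).
Proof.
apply: maximal_attack_free => S'.
exact: admissible_below_attack_free semi_stable_attack_free.
Qed.

Lemma sem_pred_attack_free k S : sem_pred k AR set0 S = (S == AR).
Proof.
case: k; [exact: complete_attack_free | exact: stable_attack_free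
  | exact: grounded_attack_free | exact: preferred_attack_free
  | exact: ideal_attack_free | exact: semi_stable_attack_free
  | exact: eager_attack_free].
Qed.

Lemma sigma_attack_free m k : sigma m k AR set0 = [set AR].
Proof.
by apply: sigma_set1; apply/setP => S; rewrite !inE sem_pred_attack_free.
Qed.

End AttackFree.
End Extensions.

Definition arg_a : 'I_2 := ord0.
Definition arg_b : 'I_2 := ord_max.
Definition expanded_AR : {set 'I_2} := [set arg_a; arg_b].
Definition expanded_Att : {set 'I_2 * 'I_2} := [set (arg_b, arg_a); (arg_b, arg_b)].

Lemma admissible_expanded S : admissible expanded_AR expanded_Att S -> S = set0.
Proof.
move=> admS; apply/setP => x; rewrite in_set0; apply/negP => xS.
have /and3P[SAR cfS _] := admS.
have bAb : attacks expanded_Att arg_b arg_b by rewrite /attacks !inE eqxx orbT.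
have := subsetP SAR x xS; rewrite !inE => /orP[]/eqP xE.
all: move: xS; rewrite xE; apply/negP.
- apply: (admissible_avoids_victims (b := arg_b)) admS => //.
  + by rewrite !inE eqxx orbT.
  + by move=> c; rewrite /attacks !inE => /orP[]/eqP[].
  + by rewrite /attacks !inE eqxx.
- exact: conflict_free_self_attack cfS bAb.
Qed.

Lemma sigma_expanded m k : sigma m k expanded_AR expanded_Att \subset [set set0].
Proof.
apply: sigma_sub1; apply/subsetP => E.
by rewrite !inE => /sem_pred_admissible/admissible_expanded->.
Qed.

Theorem proposition37 (k : sem_kind) (m : sem_mode) :
  exists (n : nat) (AR AR' : {set 'I_n}) (Att Att' : {set 'I_n * 'I_n}),
    [/\ wf_AF AR Att, wf_AF AR' Att', normal_expansion AR Att AR' Att' &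
      ~ (forall E, E \in sigma m k AR Att ->
           exists2 E', E' \in sigma m k AR' Att' &
                       (~~ (E' \subset AR) \/ E' = E))].
Proof.
exists 2, [set arg_a], expanded_AR, set0, expanded_Att; split.
- by rewrite /wf_AF sub0set.
- apply/subsetP => -[x y]; rewrite !inE => /orP[]/eqP[-> ->];
    by rewrite !eqxx ?orbT.
- rewrite /normal_expansion sub1set !inE eqxx sub0set /=.
  by apply/forall_inP => -[x y]; rewrite setD0 !inE => /orP[]/eqP[-> _].
move=> stability.
have /stability[E'] : [set arg_a] \in sigma m k [set arg_a] set0.
  by rewrite sigma_attack_free set11.
move/(subsetP (sigma_expanded m k)); rewrite inE => /eqP-> [].
  by rewrite sub0set.
by move/setP/(_ arg_a); rewrite in_set0 set11.
Qed.
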